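(* Let $\lambda=[4,2,2]$ and $\mu=[5,3]$. Then $\lambda\preccurlyeq_S\mu$, but $\lambda$ does not stably embed into $\mu$, i.e. there is no integral partition $\nu$ with $\lambda\times\nu\hookrightarrow\mu\times\nu$.
   Context: Partitions are finite nonincreasing sequences of positive integers. The product $\lambda\times\nu$ is the partition of all products $\lambda_i\nu_j$, reordered nonincreasingly. $\lambda=[\lambda_1,\ldots,\lambda_m]$ embeds into $\mu=[\mu_1,\ldots,\mu_n]$, written $\lambda\hookrightarrow\mu$, if there is a map $\varphi:\{1,\ldots,m\}\to\{1,\ldots,n\}$ with $\sum_{i\in\varphi^{-1}(j)}\lambda_i\le\mu_j$ for all $j$. $\lambda\preccurlyeq_S\mu$ means: for every $x\in\mathbb N$, $\sum_{\lambda_i\ge x}\lambda_i\le\sum_{\mu_j\ge x}\mu_j$. *)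

From mathcomp Require Import all_boot.
Set Implicit Arguments. Unset Strict Implicit. Unset Printing Implicit Defensive.

Definition is_partition (s : seq nat) : bool :=
  sorted geq s && all (fun x => 0 < x) s.

Definition pprod (lam nu : seq nat) : seq nat :=
  sort geq [seq x * y | x <- lam, y <- nu].

Definition embeds (lam mu : seq nat) : Prop :=
  exists phi : 'I_(size lam) -> 'I_(size mu),
    forall j : 'I_(size mu),
      \sum_(i < size lam | phi i == j) nth 0 lam i <= nth 0 mu j.

Definition precS (lam mu : seq nat) : Prop :=
  forall x : nat,
    \sum_(a <- lam | x <= a) a <= \sum_(b <- mu | x <= b) b.

From mathcomp Require Import all_boot.
Set Implicit Arguments. Unset Strict Implicit. Unset Printing Implicit Defensive.

(* Summing over the product partition shows |λ×ν| = |μ×ν|, so an embedding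
   of λ×ν into μ×ν must fill every part of μ×ν exactly.  Let g be the gcd of
   the parts of ν.  Every part of λ×ν = [4,2,2]×ν is a multiple of 2g, hence
   so is every part of μ×ν; in particular 3y for each part y of ν.  Since 2g
   also divides 2y, it divides y for every part y of ν, i.e. 2g divides g:
   impossible as g > 0. *)

Lemma sumn_map_mull x t : sumn [seq x * y | y <- t] = x * sumn t.
Proof. by elim: t => [|y t IHt] /=; rewrite ?muln0 // IHt mulnDr. Qed.

Lemma sumn_pprod s t : sumn (pprod s t) = sumn s * sumn t.
Proof.
rewrite /pprod (perm_sumn (permEl (perm_sort _ _))).
by elim: s => [|x s IHs] //=; rewrite sumn_cat IHs sumn_map_mull mulnDl.
Qed.

Lemma mem_pprod_mul s t x y : x \in s -> y \in t -> x * y \in pprod s t.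
Proof. by move=> sx ty; rewrite mem_sort; apply/allpairsP; exists (x, y). Qed.

Lemma dvdn_mem_pprod a b s t z :
  {in s, forall x, a %| x} -> {in t, forall y, b %| y} ->
  z \in pprod s t -> a * b %| z.
Proof.
move=> dvd_s dvd_t; rewrite mem_sort => /allpairsP [[x y] [/= sx ty ->]].
by rewrite dvdn_mul ?dvd_s ?dvd_t.
Qed.

Definition seq_gcd (s : seq nat) : nat := foldr gcdn 0 s.

Lemma seq_gcdP s d : reflect {in s, forall x, d %| x} (d %| seq_gcd s).
Proof.
elim: s => [|x s IHs] /=; first by rewrite dvdn0; constructor.
rewrite dvdn_gcd; apply: (iffP andP) => [[dx /IHs ds] z | ds].
  by rewrite inE => /predU1P [-> | /ds].
by split; [apply: ds; rewrite mem_head | apply/IHs => z sz; rewrite ds ?inE ?sz ?orbT].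
Qed.

Lemma dvdn_seq_gcd s x : x \in s -> seq_gcd s %| x.
Proof. exact/seq_gcdP. Qed.

Lemma exists_ndvdn_double_seq_gcd s x :
  x \in s -> 0 < x -> exists2 y, y \in s & ~~ ((seq_gcd s).*2 %| y).
Proof.
move=> sx x_gt0; have g_gt0 : 0 < seq_gcd s := dvdn_gt0 x_gt0 (dvdn_seq_gcd sx).
have [[y sy ndvd] | /hasPn dvd2g] := altP (@hasP _ (fun y => ~~ ((seq_gcd s).*2 %| y)) s).
  by exists y.
have /seq_gcdP/dvdn_leq := fun y sy => negbNE (dvd2g y sy).
by move=> /(_ g_gt0); rewrite -addnn -[X in _ <= X]add0n leq_add2r leqNgt g_gt0.
Qed.

Lemma eq_of_leq_sum (I : finType) (E1 E2 : I -> nat) :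
  (forall i, E1 i <= E2 i) -> \sum_i E2 i <= \sum_i E1 i -> forall i, E1 i = E2 i.
Proof.
move=> le_E12; rewrite (geq_leqif (leqif_sum (fun i _ => leqif_eq (le_E12 i)))).
by move/forall_inP => eq_E12 i; apply/eqP/eq_E12.
Qed.

Lemma sumn_nth_ord s : \sum_(i < size s) nth 0 s i = sumn s.
Proof. by rewrite sumnE (big_nth 0) big_mkord. Qed.

Lemma embeds_fiber_eq lam mu (phi : 'I_(size lam) -> 'I_(size mu)) :
  (forall j, \sum_(i < size lam | phi i == j) nth 0 lam i <= nth 0 mu j) ->
  sumn mu <= sumn lam ->
  forall j, \sum_(i < size lam | phi i == j) nth 0 lam i = nth 0 mu j.
Proof.
move=> le_fiber le_sum; apply: eq_of_leq_sum => //.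
by move: le_sum; rewrite -!sumn_nth_ord (partition_big phi xpredT).
Qed.

Lemma embeds_dvdn d lam mu :
  embeds lam mu -> sumn mu <= sumn lam ->
  {in lam, forall x, d %| x} -> {in mu, forall z, d %| z}.
Proof.
move=> [phi le_fiber] le_sum dvd_lam z mu_z.
have j_lt : index z mu < size mu by rewrite index_mem.
rewrite -(nth_index 0 mu_z) -(embeds_fiber_eq le_fiber le_sum (Ordinal j_lt)).
by apply: dvdn_sum => i _; rewrite dvd_lam ?mem_nth.
Qed.

Theorem mainTheorem6 :
  precS [:: 4; 2; 2] [:: 5; 3] /\
  ~ (exists nu : seq nat,
        is_partition nu /\ nu != [::] /\
        embeds (pprod [:: 4; 2; 2] nu) (pprod [:: 5; 3] nu)).
Proof.
split=> [x | [nu [/andP [_ /allP nu_gt0] [nu_nil emb]]]].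
  by rewrite !big_cons !big_nil; case: x => [|[|[|[|[|[|x]]]]]].
have [x nu_x] : exists x, x \in nu.
  by case: nu nu_nil {nu_gt0 emb} => // x nu _; exists x; rewrite mem_head.
have [y nu_y ndvd_y] := exists_ndvdn_double_seq_gcd nu_x (nu_gt0 x nu_x).
have even_lam : {in [:: 4; 2; 2], forall a, 2 %| a} by move=> a; rewrite !inE => /or3P [] /eqP ->.
have dvd_lam_nu := dvdn_mem_pprod even_lam (@dvdn_seq_gcd nu).
have same_size : sumn (pprod [:: 5; 3] nu) <= sumn (pprod [:: 4; 2; 2] nu).
  by rewrite !sumn_pprod.
have := embeds_dvdn emb same_size dvd_lam_nu (mem_pprod_mul (mem_last 5 [:: 3]) nu_y).
rewrite mul2n mulSn dvdn_addl ?(negbTE ndvd_y) //.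
by rewrite -!mul2n dvdn_pmul2l ?dvdn_seq_gcd.
Qed.
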